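(* Let $\mathbf{X}^*=(X^*_{1:1},\dots,X^*_{n:n})'$, $\boldsymbol{\mu}$, $\mathbf{E}$ be as in the context and $\mathbf{1}=(1,\dots,1)'\in\mathbb{R}^n$. Then the partial maxima BLIEs of $\theta_1$ and $\theta_2$ are, respectively, \[ T_1=\frac{\mathbf{1}'\mathbf{E}^{-1}\mathbf{X}^*}{\mathbf{1}'\mathbf{E}^{-1}\mathbf{1}},\qquad T_2=\frac{\mathbf{1}'\mathbf{G}\mathbf{X}^*}{\mathbf{1}'\mathbf{E}^{-1}\mathbf{1}}, \] where $\mathbf{G}=\mathbf{E}^{-1}(\mathbf{1}\boldsymbol{\mu}'-\boldsymbol{\mu}\mathbf{1}')\mathbf{E}^{-1}$, and their mean squared errors are \[ \mathrm{MSE}[T_1]=\frac{\theta_2^2}{\mathbf{1}'\mathbf{E}^{-1}\mathbf{1}},\qquad \mathrm{MSE}[T_2]=\Big(1-\frac{D}{\mathbf{1}'\mathbf{E}^{-1}\mathbf{1}}\Big)\theta_2^2, \] where $D=(\mathbf{1}'\mathbf{E}^{-1}\mathbf{1})(\boldsymbol{\mu}'\mathbf{E}^{-1}\boldsymbol{\mu})-(\mathbf{1}'\mathbf{E}^{-1}\boldsymbol{\mu})^2>0$.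
   Context: $F$ is a known, parameter-free, non-degenerate distribution function on $\mathbb{R}$ with finite variance. For unknown $\theta_1\in\mathbb{R}$, $\theta_2>0$, $X_1^*,\dots,X_n^*$ are i.i.d. with distribution function $F((x-\theta_1)/\theta_2)$ and $X^*_{j:j}=\max\{X_1^*,\dots,X_j^*\}$. Let $X_1,\dots,X_n$ be i.i.d. from $F$, $X_{j:j}=\max\{X_1,\dots,X_j\}$, $\mathbf{X}=(X_{1:1},\dots,X_{n:n})'$, $\boldsymbol{\mu}=\mathbb{E}[\mathbf{X}]$, $\mathbf{E}=\mathbb{E}[\mathbf{X}\mathbf{X}']$ (positive definite). A linear statistic $L(\mathbf{X}^* )=\mathbf{c}'\mathbf{X}^*$ ($\mathbf{c}\in\mathbb{R}^n$ constant) is invariant for $\theta_1$ if $L(b\mathbf{X}^*+a\mathbf{1})=a+bL(\mathbf{X}^* )$ for all $a\in\mathbb{R}$, $b>0$ (equivalently $\mathbf{c}'\mathbf{1}=1$), and invariant for $\theta_2$ if $L(b\mathbf{X}^*+a\mathbf{1})=bL(\mathbf{X}^* )$ for all $a\in\mathbb{R}$, $b>0$ (equivalently $\mathbf{c}'\mathbf{1}=0$). The BLIE of $\theta_k$ is the linear statistic invariant for $\theta_k$ minimizing the mean squared error $\mathbb{E}[L-\theta_k]^2$. *)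

From HB Require Import structures.
From mathcomp Require Import all_boot all_order all_algebra.
From mathcomp Require Import all_classical all_reals all_analysis.
Set Implicit Arguments. Unset Strict Implicit. Unset Printing Implicit Defensive.
Import Order.TTheory GRing.Theory Num.Theory.
Local Open Scope classical_set_scope.
Local Open Scope ring_scope.

Section Defs.
Context {d : measure_display} {T : measurableType d} {R : realType}.

Definition mutually_independent (P : probability T R) (n : nat)
  (Y : 'I_n -> T -> R) : Prop :=
  forall B : 'I_n -> set R, (forall i, measurable (B i)) ->
    P (\bigcap_(i in [set: 'I_n]) (Y i @^-1` B i)) =
    (\prod_(i < n) P (Y i @^-1` B i))%E.

Definition identically_distributed (P : probability T R) (n : nat)
  (Y : 'I_n -> T -> R) : Prop :=
  forall (i j : 'I_n) (B : set R), measurable B ->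
    P (Y i @^-1` B) = P (Y j @^-1` B).

(* partial maximum X_{j:j} = max{Y_0, ..., Y_j} (0-based indices) *)
Definition partial_max (n : nat) (Y : 'I_n -> T -> R) (j : 'I_n) : T -> R :=
  fun w => \big[Num.max/Y j w]_(i < n | (i <= j)%N) Y i w.

Definition expect (P : probability T R) (f : T -> R) : R :=
  fine (\int[P]_w (f w)%:E).

Definition pmax_mean (P : probability T R) (n : nat) (Y : 'I_n -> T -> R)
  : 'cV[R]_n := \col_j expect P (partial_max Y j).

Definition pmax_moment (P : probability T R) (n : nat) (Y : 'I_n -> T -> R)
  : 'M[R]_n :=
  \matrix_(i, j) expect P (fun w => partial_max Y i w * partial_max Y j w).

End Defs.

Definition ones {R : nzRingType} (n : nat) : 'cV[R]_n := const_mx 1.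

Definition linstat {R : nzRingType} (n : nat) (c : 'rV[R]_n) (x : 'I_n -> R) : R :=
  \sum_(j < n) c 0 j * x j.

Definition invariant_loc {R : realType} (n : nat) (c : 'rV[R]_n) : Prop :=
  forall (a b : R) (x : 'I_n -> R), 0 < b ->
    linstat c (fun j => b * x j + a) = a + b * linstat c x.

Definition invariant_scale {R : realType} (n : nat) (c : 'rV[R]_n) : Prop :=
  forall (a b : R) (x : 'I_n -> R), 0 < b ->
    linstat c (fun j => b * x j + a) = b * linstat c x.

Definition pos_def {R : realType} (n : nat) (A : 'M[R]_n) : Prop :=
  forall v : 'cV[R]_n, v != 0 -> 0 < (v^T *m A *m v) 0 0.

(* the location-scale sample X*_i = theta1 + theta2 * Y_i, which has
   distribution function F((x - theta1)/theta2) when Y_i ~ F *)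
Definition ls_sample {d : measure_display} {T : measurableType d} {R : realType}
  (n : nat) (Y : 'I_n -> T -> R) (th1 th2 : R) : 'I_n -> T -> R :=
  fun i w => th1 + th2 * Y i w.

Definition MSE {d : measure_display} {T : measurableType d} {R : realType}
  (P : probability T R) (n : nat) (Y : 'I_n -> T -> R)
  (c : 'rV[R]_n) (th1 th2 target : R) : R :=
  expect P (fun w =>
    (linstat c (fun j => partial_max (ls_sample Y th1 th2) j w) - target) ^+ 2).

Definition is_BLIE_loc {d : measure_display} {T : measurableType d} {R : realType}
  (P : probability T R) (n : nat) (Y : 'I_n -> T -> R) (c : 'rV[R]_n) : Prop :=
  invariant_loc c /\
  forall (th1 th2 : R), 0 < th2 -> forall c' : 'rV[R]_n, invariant_loc c' ->
    MSE P Y c th1 th2 th1 <= MSE P Y c' th1 th2 th1.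

Definition is_BLIE_scale {d : measure_display} {T : measurableType d} {R : realType}
  (P : probability T R) (n : nat) (Y : 'I_n -> T -> R) (c : 'rV[R]_n) : Prop :=
  invariant_scale c /\
  forall (th1 th2 : R), 0 < th2 -> forall c' : 'rV[R]_n, invariant_scale c' ->
    MSE P Y c th1 th2 th2 <= MSE P Y c' th1 th2 th2.

From HB Require Import structures.
From mathcomp Require Import all_boot all_order all_algebra.
From mathcomp Require Import all_classical all_reals all_analysis.
From mathcomp Require Import measurable_realfun ring lra.
Set Implicit Arguments. Unset Strict Implicit. Unset Printing Implicit Defensive.
Import Order.TTheory GRing.Theory Num.Theory.
Local Open Scope classical_set_scope.
Local Open Scope ring_scope.

(* Since X* = theta1 1 + theta2 X with X the partial maxima of the standard
   sample, the MSE of an invariant statistic c'X* is quadratic in c: it is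
   theta2^2 c'Ec when c'1 = 1 (target theta1) and theta2^2 (1 + c'Ec - 2 c'mu)
   when c'1 = 0 (target theta2).  Minimising c'Ec - 2 c'm over a hyperplane
   c'1 = const is solved by the c0 with Ec0 = m + lambda 1, and every other
   feasible c exceeds the minimum by (c - c0)'E(c - c0) > 0; this gives both
   BLIEs, their uniqueness and their MSEs.  D > 0 is Cauchy-Schwarz for the
   inner product E^-1: with s = 1'E^-1 1 and t = 1'E^-1 mu, the vector
   w = s mu - t 1 satisfies w'E^-1 w = s D, and w <> 0 because mu_1 <> mu_2;
   otherwise X_{2:2} - X_{1:1} >= 0 would have mean 0, hence vanish almost
   surely, against the positive definiteness of E. *)

Section QuadraticForm.
Variables (R : realType) (n : nat) (E : 'M[R]_n).

Definition dotv (c : 'rV[R]_n) (v : 'cV[R]_n) : R := (c *m v) 0 0.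
Definition bform (a b : 'rV[R]_n) : R := dotv a (E *m b^T).
Definition qform (c : 'rV[R]_n) : R := bform c c.

Lemma dotvDl a b v : dotv (a + b) v = dotv a v + dotv b v.
Proof. by rewrite /dotv mulmxDl mxE. Qed.

Lemma dotvBl a b v : dotv (a - b) v = dotv a v - dotv b v.
Proof. by rewrite /dotv mulmxBl !mxE. Qed.

Lemma dotvZl k a v : dotv (k *: a) v = k * dotv a v.
Proof. by rewrite /dotv -scalemxAl mxE. Qed.

Lemma dotvDr a u v : dotv a (u + v) = dotv a u + dotv a v.
Proof. by rewrite /dotv mulmxDr mxE. Qed.

Lemma dotvBr a u v : dotv a (u - v) = dotv a u - dotv a v.
Proof. by rewrite /dotv mulmxBr !mxE. Qed.

Lemma dotvZr k a v : dotv a (k *: v) = k * dotv a v.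
Proof. by rewrite /dotv -scalemxAr mxE. Qed.

Lemma dotv0 a : dotv a 0 = 0.
Proof. by rewrite /dotv mulmx0 mxE. Qed.

Lemma dotv_tr a v : dotv a v = dotv v^T a^T.
Proof. by rewrite /dotv -trmx_mul [RHS]mxE. Qed.

Lemma bformDl a b c : bform (a + b) c = bform a c + bform b c.
Proof. exact: dotvDl. Qed.

Lemma bformDr a b c : bform a (b + c) = bform a b + bform a c.
Proof. by rewrite /bform linearD mulmxDr dotvDr. Qed.

Hypothesis E_sym : E^T = E.

Lemma bformC a b : bform a b = bform b a.
Proof. by rewrite /bform dotv_tr !trmx_mul trmxK E_sym /dotv mulmxA. Qed.

Lemma qformD a b : qform (a + b) = qform a + 2 * bform a b + qform b.
Proof. by rewrite /qform bformDl !bformDr [bform b a]bformC; ring. Qed.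

Hypothesis E_pd : pos_def E.

Lemma qform_gt0 c : c != 0 -> 0 < qform c.
Proof.
move=> c0; have := @E_pd (c^T); rewrite trmxK -mulmxA; apply.
by rewrite -(inj_eq trmx_inj) trmxK trmx0.
Qed.

Lemma qform_ge0 c : 0 <= qform c.
Proof.
have [->|c0] := eqVneq c 0; last exact/ltW/qform_gt0.
by rewrite /qform /bform /dotv mul0mx mxE.
Qed.

Lemma qform_le0 c : qform c <= 0 -> c = 0.
Proof.
move=> c_le0; apply/eqP/negPn/negP => /qform_gt0.
by rewrite ltNge c_le0.
Qed.

Lemma pos_def_unitmx : E \in unitmx.
Proof.
rewrite -row_free_unit -kermx_eq0; apply/rowV0P => v /sub_kermxP vE0.
by apply: qform_le0; rewrite /qform /bform /dotv mulmxA vE0 mul0mx mxE.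
Qed.

(* [c0] satisfies the Lagrange condition for minimising [qform c - 2 * dotv c m]
   on a hyperplane [dotv c (ones n) = const]. *)
Section ConstrainedMinimum.
Variables (m : 'cV[R]_n) (lam : R) (c0 : 'rV[R]_n).
Hypothesis c0_stationary : E *m c0^T = m + lam *: ones n.

Lemma bform_stationary a : bform a c0 = dotv a m + lam * dotv a (ones n).
Proof. by rewrite /bform c0_stationary dotvDr dotvZr. Qed.

Lemma constrained_quadratic_split c :
  dotv c (ones n) = dotv c0 (ones n) ->
  qform c - 2 * dotv c m = qform c0 - 2 * dotv c0 m + qform (c - c0).
Proof.
move=> same_sum; set v := c - c0.
have v1 : dotv v (ones n) = 0 by rewrite dotvBl same_sum subrr.
have -> : c = c0 + v by rewrite addrC subrK.
by rewrite qformD dotvDl bformC bform_stationary v1 mulr0 addr0; ring.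
Qed.

Lemma constrained_quadratic_min c :
  dotv c (ones n) = dotv c0 (ones n) ->
  qform c0 - 2 * dotv c0 m <= qform c - 2 * dotv c m.
Proof. by move/constrained_quadratic_split => ->; rewrite lerDl qform_ge0. Qed.

Lemma constrained_quadratic_min_unique c :
  dotv c (ones n) = dotv c0 (ones n) ->
  qform c - 2 * dotv c m <= qform c0 - 2 * dotv c0 m -> c = c0.
Proof.
move/constrained_quadratic_split => -> /[!gerDl] /qform_le0 /eqP.
by rewrite subr_eq0 => /eqP.
Qed.

End ConstrainedMinimum.
End QuadraticForm.

Section GeneralizedLeastSquares.
Variables (R : realType) (n : nat) (E : 'M[R]_n) (mu : 'cV[R]_n).
Hypotheses (E_sym : E^T = E) (E_pd : pos_def E) (n_gt0 : (0 < n)%N).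

Definition inv_form (u v : 'cV[R]_n) : R := dotv (u^T *m invmx E) v.

Local Notation Ei := (invmx E).
Local Notation s := (inv_form (ones n) (ones n)).
Local Notation t := (inv_form (ones n) mu).
Local Notation u := (inv_form mu mu).

Definition c_loc : 'rV[R]_n := s^-1 *: ((ones n)^T *m Ei).

Definition c_scale : 'rV[R]_n :=
  s^-1 *: ((ones n)^T *m (Ei *m (ones n *m mu^T - mu *m (ones n)^T) *m Ei)).

Definition disc : R := s * u - t ^+ 2.

Lemma invmx_sym : Ei^T = Ei.
Proof. by rewrite trmx_inv E_sym. Qed.

Lemma mulmx_invmx : E *m Ei = 1%:M.
Proof. exact/mulmxV/pos_def_unitmx. Qed.

Lemma inv_formC a b : inv_form a b = inv_form b a.
Proof. by rewrite /inv_form dotv_tr trmx_mul invmx_sym trmxK /dotv mulmxA. Qed.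

Lemma inv_form_gt0 v : v != 0 -> 0 < inv_form v v.
Proof.
move=> v0; have := @E_pd (Ei *m v).
rewrite trmx_mul invmx_sym -!mulmxA (mulmxA E) mulmx_invmx mul1mx mulmxA; apply.
apply: contra v0 => /eqP Eiv0; apply/eqP.
by rewrite -[v]mul1mx -mulmx_invmx -mulmxA Eiv0 mulmx0.
Qed.

Lemma ones_neq0 : ones n != 0 :> 'cV[R]_n.
Proof.
apply/negP => /eqP/matrixP/(_ (Ordinal n_gt0) 0); rewrite !mxE => /eqP.
by rewrite oner_eq0.
Qed.

Lemma inv_form_ones_gt0 : 0 < s.
Proof. exact/inv_form_gt0/ones_neq0. Qed.

Lemma inv_form_ones_neq0 : s != 0.
Proof. by rewrite gt_eqF // inv_form_ones_gt0. Qed.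

Lemma c_loc_stationary : E *m c_loc^T = 0 + s^-1 *: ones n.
Proof.
rewrite /c_loc linearZ /= trmx_mul trmxK invmx_sym -scalemxAr.
by rewrite mulmxA mulmx_invmx mul1mx add0r.
Qed.

Lemma dotv_c_loc_ones : dotv c_loc (ones n) = 1.
Proof. by rewrite dotvZl mulVf // inv_form_ones_neq0. Qed.

Lemma qform_c_loc : qform E c_loc = s^-1.
Proof.
by rewrite /qform (bform_stationary c_loc_stationary) dotv0 dotv_c_loc_ones mulr1 add0r.
Qed.

Lemma c_loc_min c : dotv c (ones n) = 1 -> qform E c_loc <= qform E c.
Proof.
rewrite -dotv_c_loc_ones => c1.
have := constrained_quadratic_min E_sym E_pd c_loc_stationary c1.
by rewrite !dotv0 !mulr0 !subr0.
Qed.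

Lemma c_loc_min_unique c :
  dotv c (ones n) = 1 -> qform E c <= qform E c_loc -> c = c_loc.
Proof.
rewrite -dotv_c_loc_ones => c1 le_c.
apply: (constrained_quadratic_min_unique E_sym E_pd c_loc_stationary c1).
by rewrite !dotv0 !mulr0 !subr0.
Qed.

Lemma c_scaleE : c_scale = mu^T *m Ei - (t / s) *: ((ones n)^T *m Ei).
Proof.
rewrite /c_scale !mulmxA mulmxBr mulmxBl !mulmxA.
rewrite [(ones n)^T *m Ei *m ones n]mx11_scalar [(ones n)^T *m Ei *m mu]mx11_scalar.
rewrite !mul_scalar_mx -!/(dotv _ _) -!/(inv_form _ _).
by rewrite -!scalemxAl scalerBr !scalerA mulVf ?inv_form_ones_neq0 // scale1r mulrC.
Qed.

Lemma c_scale_stationary : E *m c_scale^T = mu + (- (t / s)) *: ones n.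
Proof.
rewrite c_scaleE linearB linearZ /= !trmx_mul !trmxK invmx_sym.
by rewrite mulmxBr -scalemxAr !mulmxA mulmx_invmx !mul1mx scaleNr.
Qed.

Lemma dotv_c_scale_ones : dotv c_scale (ones n) = 0.
Proof.
rewrite c_scaleE dotvBl dotvZl -!/(inv_form _ _) inv_formC.
by rewrite divfK ?inv_form_ones_neq0 // subrr.
Qed.

Lemma c_scale_objective : qform E c_scale - 2 * dotv c_scale mu = - (disc / s).
Proof.
have dotv_mu : dotv c_scale mu = u - t ^+ 2 / s.
  by rewrite c_scaleE dotvBl dotvZl mulrAC -expr2.
rewrite /qform (bform_stationary c_scale_stationary) dotv_c_scale_ones dotv_mu /disc.
by field; rewrite inv_form_ones_neq0.
Qed.

Lemma c_scale_min c : dotv c (ones n) = 0 ->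
  qform E c_scale - 2 * dotv c_scale mu <= qform E c - 2 * dotv c mu.
Proof.
move=> c0; apply: (constrained_quadratic_min E_sym E_pd c_scale_stationary).
by rewrite c0 dotv_c_scale_ones.
Qed.

Lemma c_scale_min_unique c : dotv c (ones n) = 0 ->
  qform E c - 2 * dotv c mu <= qform E c_scale - 2 * dotv c_scale mu -> c = c_scale.
Proof.
move=> c0; apply: (constrained_quadratic_min_unique E_sym E_pd c_scale_stationary).
by rewrite c0 dotv_c_scale_ones.
Qed.

Lemma disc_gt0 (i j : 'I_n) : mu i 0 != mu j 0 -> 0 < disc.
Proof.
move=> mu_ij; set w := s *: mu - t *: ones n.
have w_neq0 : w != 0.
  apply: contra mu_ij => /eqP/matrixP w0; have := w0 i 0; have := w0 j 0.
  rewrite !mxE => wj wi; have : s * (mu i 0 - mu j 0) = 0 by rewrite mulrBr; lra.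
  by move/eqP; rewrite mulf_eq0 (negPf inv_form_ones_neq0) subr_eq0.
have w_form : inv_form w w = s * disc.
  rewrite [LHS]/inv_form /w raddfB /= !linearZ /= !scalerN mulmxBl -!scalemxAl.
  rewrite dotvBl !dotvZl !dotvBr !dotvZr -!/(inv_form _ _).
  by rewrite [inv_form mu (ones n)]inv_formC /disc; ring.
by rewrite -(pmulr_rgt0 _ inv_form_ones_gt0) -w_form inv_form_gt0.
Qed.

End GeneralizedLeastSquares.

Section PartialMaxima.
Variables (d : measure_display) (T : measurableType d) (R : realType) (n : nat).
Variable Y : 'I_n -> T -> R.
Local Notation X := (partial_max Y).

Lemma partial_max_attained j w : exists k, X j w = Y k w.
Proof.
apply: (big_ind (fun v => exists k, v = Y k w)); first by exists j.
- by move=> _ _ [k ->] [l ->]; rewrite maxEle; case: ifP; [exists l | exists k].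
- by move=> i _; exists i.
Qed.

Lemma partial_max_ge (i j : 'I_n) w : (i <= j)%N -> Y i w <= X j w.
Proof. exact: le_bigmax_cond. Qed.

Lemma partial_max_mono (i j : 'I_n) w : (i <= j)%N -> X i w <= X j w.
Proof.
move=> ij; apply: bigmax_le => [|k ki]; apply: partial_max_ge => //.
exact: leq_trans ki ij.
Qed.

Lemma measurable_bigmax (I : Type) (s : seq I) (p : pred I) (g : T -> R)
    (F : I -> T -> R) :
  measurable_fun setT g -> (forall i, measurable_fun setT (F i)) ->
  measurable_fun setT (fun w => \big[Num.max/g w]_(i <- s | p i) F i w).
Proof.
move=> mg mF; elim: s => [|i s IH]; first by under eq_fun do rewrite big_nil.
under eq_fun do rewrite big_cons; case: (p i) => //.
exact: measurable_maxr.
Qed.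

Lemma measurable_partial_max j :
  (forall i, measurable_fun setT (Y i)) -> measurable_fun setT (X j).
Proof. by move=> mY; apply: measurable_bigmax. Qed.

Lemma partial_max_ls_sample th1 th2 j w : 0 <= th2 ->
  partial_max (ls_sample Y th1 th2) j w = th1 + th2 * X j w.
Proof.
move=> th2_ge0; have affine_max : {morph (fun v => th1 + th2 * v) : x y /
    Num.max x y >-> Num.max x y}.
  by move=> x y /=; rewrite maxr_pMr // addr_maxr.
by rewrite /partial_max (big_morph _ affine_max (erefl _)).
Qed.

End PartialMaxima.

Section Expectation.
Variables (d : measure_display) (T : measurableType d) (R : realType).
Variable P : probability T R.
Local Notation integrable f := (P.-integrable setT (EFin \o f)).

Lemma integrable_sumr (I : Type) (s : seq I) (f : I -> T -> R) :
  (forall i, integrable (f i)) -> integrable (fun w => \sum_(i <- s) f i w).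
Proof.
move=> f_int; elim: s => [|i s IH].
  by under eq_fun do rewrite big_nil; exact: finite_measure_integrable_cst.
by under eq_fun do rewrite big_cons; exact: (integrableD measurableT (f_int i) IH).
Qed.

Lemma integrable_scalel k f : integrable f -> integrable (fun w => k * f w).
Proof. exact: (integrableZl measurableT). Qed.

Lemma expectD f g : integrable f -> integrable g ->
  expect P (fun w => f w + g w) = expect P f + expect P g.
Proof. exact: RintegralD. Qed.

Lemma expectZl k f : integrable f -> expect P (fun w => k * f w) = k * expect P f.
Proof. exact: RintegralZl. Qed.

Lemma expect_cst k : expect P (fun _ => k) = k.
Proof.
have := Rintegral_cst P (@measurableT _ T) k.
by rewrite (_ : fine (P setT) = 1) ?mulr1 // probability_setT.
Qed.

Lemma expect_sum (I : Type) (s : seq I) (f : I -> T -> R) :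
  (forall i, integrable (f i)) ->
  expect P (fun w => \sum_(i <- s) f i w) = \sum_(i <- s) expect P (f i).
Proof.
move=> f_int; elim: s => [|i s IH].
  by under eq_fun do rewrite big_nil; rewrite big_nil expect_cst.
under eq_fun do rewrite big_cons.
by rewrite expectD ?IH ?big_cons //; exact: integrable_sumr.
Qed.

Lemma expect_sqr_eq0 f : measurable_fun setT f -> integrable f ->
  (forall w, 0 <= f w) -> expect P f = 0 -> expect P (fun w => f w ^+ 2) = 0.
Proof.
move=> mf f_int f_ge0 Ef0.
have int_f0 : (\int[P]_w `|(f w)%:E| = 0)%E.
  under eq_integral do rewrite gee0_abs ?lee_fin //.
  by rewrite -(fineK (integrable_fin_num measurableT f_int)) -/(expect P f) Ef0.
have mfE : measurable_fun setT (EFin \o f) by exact/measurable_EFinP.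
have f_ae0 := (ae_eq_integral_abs P measurableT mfE).1 int_f0.
rewrite /expect (ae_eq_integral (cst 0%E)) ?integral0 //.
- by apply/measurable_EFinP; exact: measurable_funX.
- by apply: filterS f_ae0 => w f0 /f0 [/= ->]; rewrite expr0n.
Qed.

End Expectation.

Lemma normr_le_1Dsqr (R : realDomainType) (x : R) : `|x| <= 1 + x ^+ 2.
Proof. rewrite -(real_normK (num_real x)); have := normr_ge0 x; nra. Qed.

Lemma normrM_le_sqrD (R : realDomainType) (x y : R) : `|x * y| <= x ^+ 2 + y ^+ 2.
Proof.
rewrite normrM -(real_normK (num_real x)) -(real_normK (num_real y)).
have := normr_ge0 x; have := normr_ge0 y; nra.
Qed.

Lemma linstat_affine (R : realType) n (c : 'rV[R]_n) a b x :
  linstat c (fun j => b * x j + a) = a * dotv c (ones n) + b * linstat c x.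
Proof.
rewrite /linstat /dotv mxE mulr_sumr mulr_sumr -big_split /=.
by apply: eq_bigr => j _; rewrite !mxE; ring.
Qed.

Section Moments.
Variables (d : measure_display) (T : measurableType d) (R : realType).
Variables (P : probability T R) (n : nat) (Y : 'I_n -> T -> R).
Hypothesis Y_meas : forall i, measurable_fun setT (Y i).
Hypothesis Y_sqr_int : forall i, P.-integrable setT (fun w => (Y i w ^+ 2)%:E).

Local Notation X := (partial_max Y).
Local Notation integrable f := (P.-integrable setT (EFin \o f)).
Local Notation mu := (pmax_mean P Y).
Local Notation E := (pmax_moment P Y).

Let sum_sqr w := \sum_k Y k w ^+ 2.

Let integrable_sum_sqr : integrable sum_sqr.
Proof. exact: integrable_sumr. Qed.

Let partial_max_sqr_le j w : X j w ^+ 2 <= sum_sqr w.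
Proof.
have [k ->] := partial_max_attained Y j w.
by rewrite /sum_sqr (bigD1 k) //= lerDl sumr_ge0 // => i _; rewrite sqr_ge0.
Qed.

Let integrable_dominated (f g : T -> R) : measurable_fun setT f ->
  (forall w, `|f w| <= g w) -> integrable g -> integrable f.
Proof.
move=> mf fg g_int; apply: le_integrable g_int => //; first exact/measurable_EFinP.
by move=> w _; rewrite /= lee_fin (le_trans (fg w)) ?ler_norm.
Qed.

Lemma integrable_partial_max j : integrable (X j).
Proof.
apply: (@integrable_dominated _ (fun w => 1 + sum_sqr w)).
- exact: measurable_partial_max.
- move=> w; apply: le_trans (normr_le_1Dsqr _) _.
  by rewrite lerD2l partial_max_sqr_le.
- exact: integrableD (finite_measure_integrable_cst _ _ _) integrable_sum_sqr.
Qed.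

Lemma integrable_partial_max_mul i j : integrable (fun w => X i w * X j w).
Proof.
apply: (@integrable_dominated _ (fun w => sum_sqr w + sum_sqr w)).
- by apply: measurable_funM; exact: measurable_partial_max.
- move=> w; apply: le_trans (normrM_le_sqrD _ _) _.
  by rewrite lerD ?partial_max_sqr_le.
- exact: integrableD integrable_sum_sqr integrable_sum_sqr.
Qed.

Lemma integrable_linstat c : integrable (fun w => linstat c (X^~ w)).
Proof.
by apply: integrable_sumr => j; apply: integrable_scalel; exact: integrable_partial_max.
Qed.

Lemma expect_linstat c : expect P (fun w => linstat c (X^~ w)) = dotv c mu.
Proof.
rewrite expect_sum => [|j]; last by apply: integrable_scalel; exact: integrable_partial_max.
rewrite /dotv mxE; apply: eq_bigr => j _.
by rewrite expectZl ?mxE //; exact: integrable_partial_max.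
Qed.

Let linstat_sqrE c w :
  linstat c (X^~ w) ^+ 2 = \sum_i \sum_j c 0 i * c 0 j * (X i w * X j w).
Proof.
rewrite expr2 /linstat mulr_suml; apply: eq_bigr => i _.
by rewrite mulr_sumr; apply: eq_bigr => j _; ring.
Qed.

Lemma integrable_linstat_sqr c : integrable (fun w => linstat c (X^~ w) ^+ 2).
Proof.
under eq_fun do rewrite linstat_sqrE.
apply: integrable_sumr => i; apply: integrable_sumr => j.
by apply: integrable_scalel; exact: integrable_partial_max_mul.
Qed.

Lemma expect_linstat_sqr c : expect P (fun w => linstat c (X^~ w) ^+ 2) = qform E c.
Proof.
under eq_fun do rewrite linstat_sqrE.
have XX_int i j : integrable (fun w => c 0 i * c 0 j * (X i w * X j w)).
  by apply: integrable_scalel; exact: integrable_partial_max_mul.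
rewrite expect_sum => [|i]; last exact: integrable_sumr.
rewrite /qform /bform /dotv mxE; apply: eq_bigr => i _.
rewrite expect_sum // mxE mulr_sumr; apply: eq_bigr => j _.
by rewrite expectZl ?integrable_partial_max_mul // !mxE; ring.
Qed.

Lemma expect_affine_linstat_sqr c a b :
  expect P (fun w => (a + b * linstat c (X^~ w)) ^+ 2) =
  a ^+ 2 + 2 * a * b * dotv c mu + b ^+ 2 * qform E c.
Proof.
have -> : (fun w => (a + b * linstat c (X^~ w)) ^+ 2) = (fun w =>
    a ^+ 2 + ((2 * a * b) * linstat c (X^~ w) + b ^+ 2 * linstat c (X^~ w) ^+ 2)).
  by apply: funext => w; ring.
have Lint := integrable_linstat c; have L2int := integrable_linstat_sqr c.
rewrite expectD ?expect_cst; first last.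
- exact: integrableD (integrable_scalel _ Lint) (integrable_scalel _ L2int).
- exact: finite_measure_integrable_cst.
rewrite expectD; try by apply: integrable_scalel.
by rewrite !expectZl // expect_linstat expect_linstat_sqr addrA.
Qed.

Lemma pmax_moment_sym : E^T = E.
Proof.
by apply/matrixP => i j; rewrite !mxE; congr expect; apply: funext => w; rewrite mulrC.
Qed.

Lemma MSE_quadratic c th1 th2 tg : 0 <= th2 ->
  MSE P Y c th1 th2 tg =
  (th1 * dotv c (ones n) - tg) ^+ 2 + 2 * (th1 * dotv c (ones n) - tg) * th2 * dotv c mu
  + th2 ^+ 2 * qform E c.
Proof.
move=> th2_ge0; rewrite -expect_affine_linstat_sqr /MSE; congr expect; apply: funext => w.
under eq_fun do rewrite partial_max_ls_sample // addrC.
by rewrite linstat_affine; congr (_ ^+ 2); ring.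
Qed.

Lemma pmax_mean_neq (i j : 'I_n) : (i < j)%N -> pos_def E -> mu i 0 != mu j 0.
Proof.
move=> ij E_pd; apply/negP => /eqP mu_ij.
pose c : 'rV[R]_n := delta_mx 0 j - delta_mx 0 i.
have cE w : linstat c (X^~ w) = X j w - X i w.
  have pick l : \sum_k (k == l)%:R * X k w = X l w.
    by rewrite (bigD1 l) //= eqxx mul1r big1 ?addr0 // => k /negPf->; rewrite mul0r.
  by rewrite /linstat /c; under eq_bigr do rewrite !mxE mulrBl; rewrite sumrB !pick.
have Z_ge0 w : 0 <= X j w - X i w by rewrite subr_ge0 partial_max_mono // ltnW.
have Z_meas : measurable_fun setT (fun w => X j w - X i w).
  by apply: measurable_funB; exact: measurable_partial_max.
have EZ0 : expect P (fun w => X j w - X i w) = 0.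
  rewrite -(eq_fun cE) expect_linstat /c dotvBl /dotv -!rowE !mxE.
  by move: mu_ij; rewrite !mxE => ->; rewrite subrr.
have qform_c0 : qform E c = 0.
  rewrite -expect_linstat_sqr; under eq_fun do rewrite cE.
  apply: expect_sqr_eq0 => //; rewrite -(eq_fun cE); exact: integrable_linstat.
have c_neq0 : c != 0.
  have ji : j != i by rewrite -(inj_eq val_inj) /= gtn_eqF.
  by apply/negP => /eqP/matrixP/(_ 0 j)/eqP; rewrite !mxE (negPf ji) /= subr0 eqxx oner_eq0.
by have := qform_gt0 E_pd c_neq0; rewrite qform_c0 ltxx.
Qed.

End Moments.

Section Invariance.
Variables (R : realType) (n : nat) (c : 'rV[R]_n).

Let linstat0 : linstat c (fun=> 0) = 0.
Proof. by rewrite /linstat big1 // => j _; rewrite mulr0. Qed.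

Lemma invariant_locE : invariant_loc c <-> dotv c (ones n) = 1.
Proof.
split=> [inv | c1 a b x _]; last by rewrite linstat_affine c1 mulr1.
by have := inv 1 1 (fun=> 0) ltr01; rewrite linstat_affine linstat0 !mulr0 !addr0 !mul1r.
Qed.

Lemma invariant_scaleE : invariant_scale c <-> dotv c (ones n) = 0.
Proof.
split=> [inv | c0 a b x _]; last by rewrite linstat_affine c0 mulr0 add0r.
by have := inv 1 1 (fun=> 0) ltr01; rewrite linstat_affine linstat0 !mulr0 !addr0 !mul1r.
Qed.

End Invariance.

Section BLIE.
Variables (d : measure_display) (T : measurableType d) (R : realType).
Variables (P : probability T R) (n : nat) (Y : 'I_n -> T -> R).
Hypothesis Y_meas : forall i, measurable_fun setT (Y i).
Hypothesis Y_sqr_int : forall i, P.-integrable setT (fun w => (Y i w ^+ 2)%:E).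
Hypothesis E_pd : pos_def (pmax_moment P Y).
Hypothesis n_gt0 : (0 < n)%N.

Local Notation mu := (pmax_mean P Y).
Local Notation E := (pmax_moment P Y).
Local Notation E_sym := (pmax_moment_sym P Y).
Local Notation s := (inv_form E (ones n) (ones n)).

Let c_loc_ones := dotv_c_loc_ones E_sym E_pd n_gt0.
Let c_scale_ones := dotv_c_scale_ones mu E_sym E_pd n_gt0.

Lemma MSE_loc c th1 th2 : 0 < th2 -> dotv c (ones n) = 1 ->
  MSE P Y c th1 th2 th1 = th2 ^+ 2 * qform E c.
Proof. by move=> th2_gt0 c1; rewrite MSE_quadratic ?ltW // c1; ring. Qed.

Lemma MSE_scale c th1 th2 : 0 < th2 -> dotv c (ones n) = 0 ->
  MSE P Y c th1 th2 th2 = th2 ^+ 2 * (1 + (qform E c - 2 * dotv c mu)).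
Proof. by move=> th2_gt0 c0; rewrite MSE_quadratic ?ltW // c0; ring. Qed.

Lemma c_loc_BLIE : is_BLIE_loc P Y (c_loc E).
Proof.
split=> [|th1 th2 th2_gt0 c /invariant_locE c1]; first exact/invariant_locE/c_loc_ones.
rewrite !MSE_loc // ler_pM2l ?exprn_gt0 //; exact: (c_loc_min E_sym E_pd n_gt0).
Qed.

Lemma BLIE_loc_unique c : is_BLIE_loc P Y c -> c = c_loc E.
Proof.
case=> /invariant_locE c1 c_min; apply: (c_loc_min_unique E_sym E_pd n_gt0 c1).
have := c_min 0 1 ltr01 _ (proj1 c_loc_BLIE).
by rewrite !MSE_loc // expr1n !mul1r.
Qed.

Lemma c_scale_BLIE : is_BLIE_scale P Y (c_scale E mu).
Proof.
split=> [|th1 th2 th2_gt0 c /invariant_scaleE c0]; first exact/invariant_scaleE/c_scale_ones.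
rewrite !MSE_scale // ler_pM2l ?exprn_gt0 // lerD2l; exact: (c_scale_min mu E_sym E_pd n_gt0).
Qed.

Lemma BLIE_scale_unique c : is_BLIE_scale P Y c -> c = c_scale E mu.
Proof.
case=> /invariant_scaleE c0 c_min; apply: (c_scale_min_unique E_sym E_pd n_gt0 c0).
have := c_min 0 1 ltr01 _ (proj1 c_scale_BLIE).
by rewrite !MSE_scale // expr1n !mul1r lerD2l.
Qed.

Lemma MSE_c_loc th1 th2 : 0 < th2 -> MSE P Y (c_loc E) th1 th2 th1 = th2 ^+ 2 / s.
Proof. by move=> th2_gt0; rewrite MSE_loc ?(qform_c_loc E_sym E_pd n_gt0). Qed.

Lemma MSE_c_scale th1 th2 : 0 < th2 ->
  MSE P Y (c_scale E mu) th1 th2 th2 = (1 - disc E mu / s) * th2 ^+ 2.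
Proof.
move=> th2_gt0; rewrite MSE_scale ?(c_scale_objective mu E_sym E_pd n_gt0) //.
by rewrite mulrC.
Qed.

End BLIE.

Theorem proposition2p2 (d : measure_display) (T : measurableType d)
  (R : realType) (P : probability T R) (n : nat) (Y : 'I_n -> T -> R) :
  (2 <= n)%N ->
  (forall i, measurable_fun setT (Y i)) ->
  mutually_independent P Y ->
  identically_distributed P Y ->
  (forall i, P.-integrable setT (fun w => (Y i w ^+ 2)%:E)) ->
  (forall i (x : R), P (Y i @^-1` [set x]) != 1%E) ->
  pos_def (pmax_moment P Y) ->
  let mu := pmax_mean P Y in
  let E := pmax_moment P Y in
  let Ei := invmx E in
  let s := ((ones n)^T *m Ei *m ones n) 0 0 in
  let G := Ei *m (ones n *m mu^T - mu *m (ones n)^T) *m Ei in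
  let D := s * (mu^T *m Ei *m mu) 0 0 - ((ones n)^T *m Ei *m mu) 0 0 ^+ 2 in
  let c1 := s^-1 *: ((ones n)^T *m Ei) in
  let c2 := s^-1 *: ((ones n)^T *m G) in
    is_BLIE_loc P Y c1 /\
      (forall c, is_BLIE_loc P Y c -> c = c1) /\
      is_BLIE_scale P Y c2 /\
      (forall c, is_BLIE_scale P Y c -> c = c2) /\
      (forall th1 th2 : R, 0 < th2 -> MSE P Y c1 th1 th2 th1 = th2 ^+ 2 / s) /\
      (forall th1 th2 : R, 0 < th2 ->
         MSE P Y c2 th1 th2 th2 = (1 - D / s) * th2 ^+ 2) /\
    0 < D.
Proof.
move=> n_ge2 Y_meas _ _ Y_sqr_int _ E_pd mu E Ei s G D c1 c2.
have n_gt0 : (0 < n)%N by apply: leq_trans n_ge2.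
split; first exact: c_loc_BLIE.
split; first exact: BLIE_loc_unique.
split; first exact: c_scale_BLIE.
split; first exact: BLIE_scale_unique.
split; first exact: MSE_c_loc.
split; first exact: MSE_c_scale.
apply: (disc_gt0 (pmax_moment_sym P Y) E_pd n_gt0 (i := Ordinal n_gt0) (j := Ordinal n_ge2)).
exact: pmax_mean_neq.
Qed.
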